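(* Let $H=(h_{ij})=(N^{-1/2}x_{ij})$ be a generalized symmetric Wigner matrix such that, for some constant $C_1>0$ and all $1\le i<j\le N$, $\mathbb{E}|h_{ii}|^2\le C_1/N$, $\mathbb{E}|h_{ij}|^2=1/N$, $\mathbb{E}|h_{ij}|^3\le C_1N^{-3/2}$, $\mathbb{E}|h_{ij}|^4\le C_1(\log N)N^{-2}$, and $H$ satisfies the bounded support condition with $q=N^{\phi}$ for some constant $\phi>0$. Then there exists another generalized symmetric Wigner matrix $\widetilde H=(N^{-1/2}\widetilde x_{ij})$ satisfying the bounded support condition with some $q\ge cN^{1/2}/\log N$ ($c>0$ a constant), such that $$\mathbb{E}x_{ij}^k=\mathbb{E}\widetilde x_{ij}^k\quad(i\ne j,\ k=1,2,3,4),\qquad \mathbb{E}x_{ii}^k=\mathbb{E}\widetilde x_{ii}^k\quad(k=1,2).$$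
   Context: A generalized symmetric Wigner matrix of size $N$ is a real symmetric matrix $H=(h_{ij})$ whose upper-triangular entries are independent real centered random variables (distributions may depend on $i,j,N$) with $|\mathbb{E}h_{ij}^2-N^{-1}|\le C_0N^{-1}\delta_{ij}$ for a constant $C_0$. The bounded support condition with $q$: for all $i,j$, $|h_{ij}|\le q^{-1}$ with probability at least $1-e^{-N^c}$ for some constant $c>0$. *)

From HB Require Import structures.
From mathcomp Require Import all_boot all_order all_algebra.
From mathcomp Require Import all_classical all_reals all_analysis.
Set Implicit Arguments. Unset Strict Implicit. Unset Printing Implicit Defensive.
Import Order.TTheory GRing.Theory Num.Theory.
Local Open Scope classical_set_scope.
Local Open Scope ring_scope.

(* A (sequence of) symmetric random matrices with independent upper-triangular
   entries is described, up to law, by the laws of its entries: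
   [mu N i j] is the law (a probability measure on R) of the entry h_ij of the
   N x N matrix H_N.  Symmetry h_ij = h_ji is reflected by mu N i j = mu N j i. *)
Definition entry_laws (R : realType) :=
  forall N : nat, 'I_N -> 'I_N -> probability R R.

Definition gen_wigner (R : realType) (mu : entry_laws R) : Prop :=
  (forall N i j, mu N i j = mu N j i) /\
  exists C0 : R, 0 <= C0 /\
    forall N (i j : 'I_N),
      (mu N i j).-integrable setT (fun x : R => x%:E) /\
      (\int[mu N i j]_x (x%:E) = 0)%E /\
      (`| \int[mu N i j]_x ((x ^+ 2)%:E) - (N%:R^-1)%:E | <=
         (C0 * N%:R^-1 * (i == j)%:R)%:E)%E.

Definition bounded_support (R : realType) (mu : entry_laws R) (q : nat -> R)
  : Prop :=
  exists c : R, 0 < c /\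
    forall N (i j : 'I_N),
      ((1 - expR (- (N%:R `^ c)))%:E <= mu N i j [set x : R | (`|x| <= (q N)^-1)%R])%E.

Definition xmoment (R : realType) (mu : entry_laws R) N (i j : 'I_N) (k : nat)
  : \bar R :=
  (\int[mu N i j]_x (((Num.sqrt N%:R * x) ^+ k)%:E))%E.

From HB Require Import structures.
From mathcomp Require Import all_boot all_order all_algebra.
From mathcomp Require Import all_classical all_reals all_analysis.
From mathcomp Require Import measurable_realfun ring lra.
Import Order.TTheory GRing.Theory Num.Theory.
Local Open Scope ring_scope.
Local Open Scope classical_set_scope.

(* Each off-diagonal entry law is replaced by a law on three atoms [0], [a],
   [-b] with the same first four moments, and each diagonal one by [+-sqrt m2]
   with probability [1/2].  With [s = m3 / m2] and [p = (m2 m4 - m3^2) / m2^2],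
   taking [a] and [-b] to be the roots of [x^2 - s x - p] and the mass [m2 / p]
   off [0] matches the moments as soon as [m2 <= p]; this is the Hankel
   inequality [m2^3 + m3^2 <= m2 m4], valid for every centered law because
   [E (m2 x^2 - m3 x - m2^2)^2 >= 0].  The atoms are at most [|s| + sqrt p], and
   the hypotheses give [sqrt N |s| <= C1] and [N p <= N^2 m4 <= C1 ln N], so all
   atoms are [O((1 + ln N) / sqrt N)]: this is the support parameter
   [q ~ sqrt N / ln N]. *)

Lemma sqrt_mul_le_add {R : rcfType} (u v : R) : 0 <= u -> 0 <= v ->
  Num.sqrt (u * v) <= u + v.
Proof.
move=> u0 v0; rewrite -[X in _ <= X]ger0_norm ?addr_ge0 // -sqrtr_sqr ler_sqrt ?sqr_ge0 //.
nra.
Qed.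

Lemma powRN3_2 {R : realType} (x : R) : 0 < x -> x `^ (- (3 / 2)) = (x * Num.sqrt x)^-1.
Proof.
move=> x0; rewrite powRN (_ : 3 / 2 = 1 + 2^-1); last by field.
by rewrite powRD ?gt_eqF ?implybT // powRr1 ?ltW // powR12_sqrt // ltW.
Qed.

Lemma powRN2 {R : realType} (x : R) : 0 <= x -> x `^ (-2) = (x ^+ 2)^-1.
Proof. by move=> x0; rewrite powRN -powR_mulrn. Qed.

Section Moments.
Context {R : realType} (P : probability R R).

(* [fine] sends an infinite integral to [0]: [mom P k] is only meaningful
   when [x ^+ k] is [P]-integrable. *)
Definition mom (k : nat) : R := fine (\int[P]_x (x ^+ k)%:E)%E.

Lemma measurable_expr k : measurable_fun setT (fun x : R => (x ^+ k)%:E).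
Proof. by apply/measurable_EFinP; exact: measurable_funX. Qed.

Lemma integrable_expr0 : P.-integrable setT (fun x => (x ^+ 0)%:E).
Proof. exact: (finite_measure_integrable_cst P 1 measurableT). Qed.

Lemma integrable_expr_abs k : (\int[P]_x (`|x| ^+ k)%:E < +oo)%E ->
  P.-integrable setT (fun x => (x ^+ k)%:E).
Proof.
move=> fin; apply/integrableP; split; first exact: measurable_expr.
by under eq_integral do rewrite abse_EFin normrX.
Qed.

Lemma integrable_exprs n : P.-integrable setT (fun x => x%:E) ->
  (forall k, (2 <= k <= n)%N -> (\int[P]_x (`|x| ^+ k)%:E < +oo)%E) ->
  forall k, (k <= n)%N -> P.-integrable setT (fun x => (x ^+ k)%:E).
Proof.
move=> int1 fin [_|[_|k kn]]; [exact: integrable_expr0 | exact: int1 |].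
by apply: integrable_expr_abs; apply: fin; rewrite kn.
Qed.

Lemma integral_exprE k : P.-integrable setT (fun x => (x ^+ k)%:E) ->
  (\int[P]_x (x ^+ k)%:E)%E = (mom k)%:E.
Proof. by move=> ik; rewrite /mom fineK // (integrable_fin_num _ ik). Qed.

Lemma integral_abs_expr_even n : ~~ odd n ->
  (\int[P]_x (`|x| ^+ n)%:E = \int[P]_x (x ^+ n)%:E)%E.
Proof. by move=> ev; apply: eq_integral => x _; rewrite -normrX ger0_norm // exprn_even_ge0. Qed.

Lemma mom0 : mom 0 = 1.
Proof.
rewrite /mom (eq_integral (fun=> 1%E)) => [|x _]; last by rewrite expr0.
by rewrite integral_cst //= probability_setT mule1.
Qed.

Lemma mom1_eq0 : (\int[P]_x x%:E = 0)%E -> mom 1 = 0.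
Proof. by rewrite /mom => mean0; rewrite [X in fine X]mean0. Qed.

Lemma mom2_ge0 : 0 <= mom 2.
Proof. by rewrite fine_ge0 // integral_ge0 // => x _; rewrite lee_fin sqr_ge0. Qed.

Lemma abs_mom_le k : P.-integrable setT (fun x => (x ^+ k)%:E) ->
  (`|mom k|%:E <= \int[P]_x (`|x| ^+ k)%:E)%E.
Proof.
move=> ik; rewrite -abse_EFin -integral_exprE //.
apply: le_trans (le_abse_integral _ _ (measurable_expr k)) _ => //.
by under eq_integral do rewrite abse_EFin normrX.
Qed.

Lemma integral_scaled_expr c k : P.-integrable setT (fun x => (x ^+ k)%:E) ->
  (\int[P]_x ((c * x) ^+ k)%:E = (c ^+ k * mom k)%:E)%E.
Proof.
move=> ik; under eq_integral do rewrite exprMn EFinM.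
by rewrite integralZl // integral_exprE // -EFinM.
Qed.

Lemma integral_sum_moments n (c : nat -> R) :
  (forall k, (k <= n)%N -> P.-integrable setT (fun x => (x ^+ k)%:E)) ->
  (\int[P]_x (\sum_(k < n.+1) c k * x ^+ k)%:E =
   (\sum_(k < n.+1) c k * mom k)%:E)%E.
Proof.
move=> ik.
rewrite (eq_integral (fun x : R => \sum_(k < n.+1) (c k)%:E * (x ^+ k)%:E)%E); last first.
  by move=> x _; rewrite -sumEFin; apply: eq_bigr => k _; rewrite EFinM.
rewrite integral_sum // => [|k]; last first.
  by apply: integrableZl => //; apply: ik; rewrite -ltnS.
rewrite -sumEFin; apply: eq_bigr => k _.
by rewrite integralZl ?integral_exprE ?ik // -ltnS.
Qed.

Lemma moment_inequality :
  (forall k, (k <= 4)%N -> P.-integrable setT (fun x => (x ^+ k)%:E)) ->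
  mom 1 = 0 -> 0 < mom 2 -> mom 2 ^+ 3 + mom 3 ^+ 2 <= mom 2 * mom 4.
Proof.
move=> ik m1 m2_gt0.
(* Expanding [E (m2 x^2 - m3 x - m2^2)^2 >= 0] gives [m2] times the claim. *)
set c := nth 0 [:: mom 2 ^+ 4; 2 * mom 3 * mom 2 ^+ 2; mom 3 ^+ 2 - 2 * mom 2 ^+ 3;
                   - (2 * mom 2 * mom 3); mom 2 ^+ 2].
have : (0 <= \int[P]_x (\sum_(k < 5) c k * x ^+ k)%:E)%E.
  apply: integral_ge0 => x _; rewrite lee_fin !big_ord_recr big_ord0 /=.
  set q := _ + _; have -> : q = (mom 2 * x ^+ 2 - mom 3 * x - mom 2 ^+ 2) ^+ 2 by rewrite /q /c /=; ring.
  exact: sqr_ge0.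
rewrite integral_sum_moments // lee_fin !big_ord_recr big_ord0 /= mom0 m1.
set e := _ + _; have -> : e = mom 2 * (mom 2 * mom 4 - mom 3 ^+ 2 - mom 2 ^+ 3) by rewrite /e /c /=; ring.
by rewrite pmulr_rge0 // subr_ge0 lerBrDr addrC.
Qed.

End Moments.

Lemma integral_scaled_expr_eq {R : realType} (P Q : probability R R) c k :
  P.-integrable setT (fun x => (x ^+ k)%:E) -> Q.-integrable setT (fun x => (x ^+ k)%:E) ->
  mom P k = mom Q k ->
  (\int[P]_x ((c * x) ^+ k)%:E = \int[Q]_x ((c * x) ^+ k)%:E)%E.
Proof. by move=> iP iQ PQ; rewrite !integral_scaled_expr // PQ. Qed.

Definition weights3 {R : numDomainType} (w1 w2 w3 : R) : bool :=
  [&& 0 <= w1, 0 <= w2, 0 <= w3 & w1 + w2 + w3 == 1].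

Section ThreePointLaw.
Context {R : realType} (w1 w2 w3 x1 x2 x3 : R).

(* When [weights3] fails the masses default to a unit mass at [x1], so that
   [three_point] is a probability for all parameters. *)
Definition mass1 := if weights3 w1 w2 w3 then w1 else 1.
Definition mass2 := if weights3 w1 w2 w3 then w2 else 0.
Definition mass3 := if weights3 w1 w2 w3 then w3 else 0.

Lemma mass1_ge0 : 0 <= mass1. Proof. by rewrite /mass1; case: ifP => // /and4P[]. Qed.
Lemma mass2_ge0 : 0 <= mass2. Proof. by rewrite /mass2; case: ifP => // /and4P[]. Qed.
Lemma mass3_ge0 : 0 <= mass3. Proof. by rewrite /mass3; case: ifP => // /and4P[]. Qed.

Lemma mass_sum : mass1 + mass2 + mass3 = 1.
Proof.
by rewrite /mass1 /mass2 /mass3; case: ifP => [/and4P[_ _ _ /eqP]|_]; rewrite ?addr0.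
Qed.

Lemma massE : weights3 w1 w2 w3 -> [/\ mass1 = w1, mass2 = w2 & mass3 = w3].
Proof. by rewrite /mass1 /mass2 /mass3 => ->. Qed.

Definition three_point : set R -> \bar R :=
  measure_add (mscale (NngNum mass1_ge0) \d_x1)
    (measure_add (mscale (NngNum mass2_ge0) \d_x2) (mscale (NngNum mass3_ge0) \d_x3)).

HB.instance Definition _ := Measure.on three_point.

Lemma three_pointE A : three_point A =
  (mass1%:E * \d_x1 A + (mass2%:E * \d_x2 A + mass3%:E * \d_x3 A))%E.
Proof. by rewrite /three_point measure_addE [X in (_ + X)%E]measure_addE. Qed.

Let three_point_setT : three_point setT = 1%E.
Proof. by rewrite three_pointE !diracT !mule1 -!EFinD addrA mass_sum. Qed.

HB.instance Definition _ := @Measure_isProbability.Build _ _ R three_point three_point_setT.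

Lemma three_point_support A : x1 \in A -> x2 \in A -> x3 \in A -> three_point A = 1%E.
Proof. by move=> A1 A2 A3; rewrite -three_point_setT !three_pointE !diracE A1 A2 A3 !in_setT. Qed.

Lemma ge0_integral_three_point (g : R -> \bar R) :
  measurable_fun setT g -> (forall x, 0 <= g x)%E ->
  (\int[three_point]_x g x = mass1%:E * g x1 + (mass2%:E * g x2 + mass3%:E * g x3))%E.
Proof.
move=> mg g0; have g0' x : setT x -> (0 <= g x)%E by move=> _; exact: g0.
rewrite /three_point !(ge0_integral_measure_add _ _ _ g0' mg) //.
by rewrite !ge0_integral_mscale //= !integral_dirac //= !diracT !mul1e.
Qed.

Lemma integral_three_point (f : R -> R) : weights3 w1 w2 w3 -> measurable_fun setT f ->
  (\int[three_point]_x (f x)%:E = (w1 * f x1 + w2 * f x2 + w3 * f x3)%:E)%E.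
Proof.
move=> /massE[<- <- <-] mf.
have mfE : measurable_fun setT (fun x => (f x)%:E) by exact/measurable_EFinP.
rewrite integralE.
have posE g : measurable_fun setT g -> (forall x, 0 <= g x)%E ->
    (\int[three_point]_x g x = mass1%:E * g x1 + (mass2%:E * g x2 + mass3%:E * g x3))%E.
  exact: ge0_integral_three_point.
rewrite !posE; [|exact: measurable_funeneg|by move=> x; exact: funeneg_ge0
               |exact: measurable_funepos|by move=> x; exact: funepos_ge0].
rewrite !funeposE !funenegE /= -!EFin_max -!EFinM -!EFinD; congr EFin.
have split_max (y : R) : Num.max y 0 - Num.max (- y) 0 = y.
  by rewrite !maxr_absE !subr0 normrN; field.
rewrite -[in RHS](split_max (f x1)) -[in RHS](split_max (f x2)) -[in RHS](split_max (f x3)).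
ring.
Qed.

Lemma three_point_integrable (f : R -> R) : measurable_fun setT f ->
  three_point.-integrable setT (fun x => (f x)%:E).
Proof.
move=> mf; apply/integrableP; split; first exact/measurable_EFinP.
under eq_integral do rewrite abse_EFin.
rewrite ge0_integral_three_point ?ltry //.
by apply/measurable_EFinP; apply: measurableT_comp; [exact: normr_measurable | exact: mf].
Qed.

Lemma mom_three_point k : weights3 w1 w2 w3 ->
  mom three_point k = w1 * x1 ^+ k + w2 * x2 ^+ k + w3 * x3 ^+ k.
Proof.
by move=> w; rewrite /mom integral_three_point //; apply: measurable_funX.
Qed.

End ThreePointLaw.

Section MomentMatching.
Context {R : rcfType} (m : nat -> R).

Definition match_s := m 3 / m 2.
Definition match_p := (m 2 * m 4 - m 3 ^+ 2) / m 2 ^+ 2.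
Definition match_disc := Num.sqrt (match_s ^+ 2 + 4 * match_p).
Definition match_a := (match_disc + match_s) / 2.
Definition match_b := (match_disc - match_s) / 2.
Definition match_w0 := 1 - m 2 / match_p.
Definition match_wa := m 2 / match_p * match_b / match_disc.
Definition match_wb := m 2 / match_p * match_a / match_disc.

Hypothesis m1 : m 1 = 0.
Hypothesis m2_gt0 : 0 < m 2.
Hypothesis hankel : m 2 ^+ 3 + m 3 ^+ 2 <= m 2 * m 4.

Lemma match_p_ge : m 2 <= match_p.
Proof. by rewrite ler_pdivlMr ?exprn_gt0 // -exprS lerBrDr. Qed.

Lemma match_p_gt0 : 0 < match_p.
Proof. exact: lt_le_trans m2_gt0 match_p_ge. Qed.

Lemma match_disc_sqr : match_disc ^+ 2 = match_s ^+ 2 + 4 * match_p.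
Proof. by rewrite sqr_sqrtr //; have := match_p_gt0; have := sqr_ge0 match_s; lra. Qed.

Lemma match_disc_ge : `|match_s| <= match_disc.
Proof.
rewrite -[X in X <= _]sqrtr_sqr ler_sqrt; last by have := match_p_gt0; have := sqr_ge0 match_s; lra.
by have := match_p_gt0; lra.
Qed.

Lemma match_disc_gt0 : 0 < match_disc.
Proof.
by rewrite sqrtr_gt0; have := match_p_gt0; have := sqr_ge0 match_s; lra.
Qed.

Lemma match_a_ge0 : 0 <= match_a.
Proof. by have := match_disc_ge; rewrite ler_norml => /andP[]; rewrite /match_a; lra. Qed.

Lemma match_b_ge0 : 0 <= match_b.
Proof. by have := match_disc_ge; rewrite ler_norml => /andP[]; rewrite /match_b; lra. Qed.

Lemma match_a_mul_b : match_a * match_b = match_p.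
Proof.
rewrite /match_a /match_b (_ : _ * _ = (match_disc ^+ 2 - match_s ^+ 2) / 4); last by field.
by rewrite match_disc_sqr; field.
Qed.

Lemma match_weights : weights3 match_w0 match_wa match_wb.
Proof.
have r_ge0 : 0 <= m 2 / match_p by rewrite divr_ge0 ?ltW ?match_p_gt0.
have disc_gt0 := match_disc_gt0.
apply/and4P; split.
- by rewrite subr_ge0 ler_pdivrMr ?match_p_gt0 // mul1r match_p_ge.
- by apply: divr_ge0; [apply: mulr_ge0 => //; exact: match_b_ge0 | exact: ltW].
- by apply: divr_ge0; [apply: mulr_ge0 => //; exact: match_a_ge0 | exact: ltW].
- apply/eqP; rewrite /match_w0 /match_wa /match_wb /match_a /match_b; field.
  by rewrite (gt_eqF disc_gt0) (gt_eqF match_p_gt0).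
Qed.

Lemma match_moments k : (1 <= k <= 4)%N ->
  match_wa * match_a ^+ k + match_wb * (- match_b) ^+ k = m k.
Proof.
have disc_neq0 : match_disc != 0 by rewrite gt_eqF ?match_disc_gt0.
have p_neq0 : match_p != 0 by rewrite gt_eqF ?match_p_gt0.
have m2_neq0 : m 2 != 0 by rewrite gt_eqF.
have a_add_b : match_a + match_b = match_disc by rewrite /match_a /match_b; field.
have a_sub_b : match_a - match_b = match_s by rewrite /match_a /match_b; field.
have momE (e : nat) : match_wa * match_a ^+ e.+1 + match_wb * (- match_b) ^+ e.+1 =
    m 2 / match_p * (match_a * match_b) * (match_a ^+ e - (- match_b) ^+ e) / (match_a + match_b).
  by rewrite /match_wa /match_wb a_add_b exprS [(- _) ^+ _.+1]exprS; field; rewrite disc_neq0.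
rewrite match_a_mul_b divfK // a_add_b in momE.
case: k => [|[|[|[|[|k]]]]] //= _; rewrite momE.
- by rewrite !expr0 subrr mulr0 mul0r m1.
- by rewrite !expr1 opprK a_add_b mulfK.
- by rewrite sqrrN subr_sqr a_add_b a_sub_b /match_s mulrA mulfK // mulrC divfK.
- rewrite (_ : _ - _ = match_disc * ((match_a - match_b) ^+ 2 + match_a * match_b)); last first.
    by rewrite -a_add_b; ring.
  rewrite a_sub_b match_a_mul_b /match_s /match_p; field.
  by rewrite disc_neq0 m2_neq0.
Qed.

Lemma match_atoms_le :
  match_a <= `|match_s| + Num.sqrt match_p /\ match_b <= `|match_s| + Num.sqrt match_p.
Proof.
have p_ge0 : 0 <= match_p by rewrite ltW ?match_p_gt0.
have disc_le : match_disc <= `|match_s| + 2 * Num.sqrt match_p.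
  have rhs_ge0 : 0 <= `|match_s| + 2 * Num.sqrt match_p by rewrite addr_ge0 ?mulr_ge0 ?sqrtr_ge0.
  rewrite -(ger0_norm rhs_ge0) -sqrtr_sqr ler_sqrt ?sqr_ge0 //.
  rewrite sqrrD [(2 * _) ^+ 2]exprMn sqr_sqrtr // real_normK ?num_real //.
  have : 0 <= `|match_s| * Num.sqrt match_p by rewrite mulr_ge0 ?sqrtr_ge0.
  rewrite expr2; lra.
have := ler_norm match_s; have := ler_norm (- match_s); rewrite normrN.
by rewrite /match_a /match_b; split; lra.
Qed.

End MomentMatching.

Section OffDiagonalEntry.
Context {R : realType} {P : probability R R} {N : nat} {C1 : R}.
Hypotheses (N_gt1 : (1 < N)%N) (C1_gt0 : 0 < C1).
Hypothesis int1 : P.-integrable setT (fun x => x%:E).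
Hypothesis abs2 : (\int[P]_x ((`|x| ^+ 2)%:E) = (N%:R^-1)%:E)%E.
Hypothesis abs3 : (\int[P]_x ((`|x| ^+ 3)%:E) <= (C1 * N%:R `^ (- (3 / 2)))%:E)%E.
Hypothesis abs4 : (\int[P]_x ((`|x| ^+ 4)%:E) <= (C1 * ln N%:R * N%:R `^ (-2))%:E)%E.

Lemma offdiag_integrable k : (k <= 4)%N -> P.-integrable setT (fun x => (x ^+ k)%:E).
Proof.
move: k; apply: integrable_exprs => // -[|[|[|[|[|k]]]]] //= _.
- by rewrite abs2 ltry.
- exact: le_lt_trans abs3 (ltry _).
- exact: le_lt_trans abs4 (ltry _).
Qed.

Lemma offdiag_mom2 : mom P 2 = N%:R^-1.
Proof. by rewrite /mom -integral_abs_expr_even // abs2. Qed.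

Lemma offdiag_atoms_scaled :
  Num.sqrt N%:R * (`|match_s (mom P)| + Num.sqrt (match_p (mom P))) <= 2 * C1 + ln N%:R.
Proof.
have N_gt0 : 0 < (N%:R : R) by rewrite ltr0n ltnW.
have sN_gt0 : 0 < Num.sqrt (N%:R : R) by rewrite sqrtr_gt0.
have lnN_ge0 : 0 <= ln (N%:R : R) by rewrite ln_ge0 // ler1n ltnW.
have m3_le : `|mom P 3| * (N%:R * Num.sqrt N%:R) <= C1.
  rewrite -ler_pdivlMr ?mulr_gt0 // -lee_fin -powRN3_2 //.
  exact: le_trans (abs_mom_le _ _ (offdiag_integrable 3 isT)) abs3.
have m4_le : mom P 4 * N%:R ^+ 2 <= C1 * ln N%:R.
  rewrite -ler_pdivlMr ?exprn_gt0 // -lee_fin -(powRN2 _ (ler0n _ N)) //.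
  by rewrite -integral_exprE ?(offdiag_integrable 4) // -integral_abs_expr_even.
have s_le : Num.sqrt N%:R * `|match_s (mom P)| <= C1.
  rewrite /match_s offdiag_mom2 invrK normrM (ger0_norm (ltW N_gt0)).
  by rewrite mulrCA [Num.sqrt _ * _]mulrC.
have p_le : Num.sqrt N%:R * Num.sqrt (match_p (mom P)) <= C1 + ln N%:R.
  rewrite -sqrtrM ?ler0n //; apply: le_trans (sqrt_mul_le_add _ _ (ltW C1_gt0) lnN_ge0).
  rewrite ler_sqrt; last exact: mulr_ge0 (ltW C1_gt0) lnN_ge0.
  have -> : N%:R * match_p (mom P) = mom P 4 * N%:R ^+ 2 - N%:R ^+ 3 * mom P 3 ^+ 2.
    by rewrite /match_p offdiag_mom2; field; rewrite gt_eqF.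
  have : 0 <= N%:R ^+ 3 * mom P 3 ^+ 2 by rewrite mulr_ge0 ?sqr_ge0 // exprn_ge0 // ltW.
  lra.
by rewrite mulrDr; lra.
Qed.

End OffDiagonalEntry.

Section DiagonalEntry.
Context {R : realType} {P : probability R R} {N : nat} {C1 : R}.
Hypotheses (N_gt0 : (0 < N)%N) (C1_gt0 : 0 < C1).
Hypothesis int1 : P.-integrable setT (fun x => x%:E).
Hypothesis abs2 : (\int[P]_x ((`|x| ^+ 2)%:E) <= (C1 / N%:R)%:E)%E.

Lemma diag_integrable k : (k <= 2)%N -> P.-integrable setT (fun x => (x ^+ k)%:E).
Proof.
move: k; apply: integrable_exprs => // -[|[|[|k]]] //= _.
exact: le_lt_trans abs2 (ltry _).
Qed.

Lemma diag_mom2_le : mom P 2 <= C1 / N%:R.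
Proof.
by rewrite -lee_fin -integral_exprE ?(diag_integrable 2) // -integral_abs_expr_even.
Qed.

Lemma diag_atom_scaled : Num.sqrt N%:R * Num.sqrt (mom P 2) <= C1 + 1.
Proof.
have Nr_gt0 : 0 < (N%:R : R) by rewrite ltr0n.
rewrite -sqrtrM ?ler0n //; apply: le_trans (sqrt_mul_le_add _ _ (ltW C1_gt0) ler01).
rewrite mulr1 ler_sqrt ?(ltW C1_gt0) // mulrC -ler_pdivlMr //.
exact: diag_mom2_le.
Qed.

End DiagonalEntry.

Definition matched_law {R : realType} (P : probability R R) : probability R R :=
  three_point (match_w0 (mom P)) (match_wa (mom P)) (match_wb (mom P))
    0 (match_a (mom P)) (- match_b (mom P)).

Definition scaled_rademacher {R : realType} (P : probability R R) : probability R R :=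
  three_point 0 2^-1 2^-1 0 (Num.sqrt (mom P 2)) (- Num.sqrt (mom P 2)).

Section MatchedLaw.
Context {R : realType} (P : probability R R).
Hypothesis int4 : forall k, (k <= 4)%N -> P.-integrable setT (fun x => (x ^+ k)%:E).
Hypotheses (mean0 : mom P 1 = 0) (var_gt0 : 0 < mom P 2).

Lemma matched_law_mom k : (1 <= k <= 4)%N -> mom (matched_law P) k = mom P k.
Proof.
move=> k14; have hankel := moment_inequality _ int4 mean0 var_gt0.
rewrite mom_three_point ?match_weights // expr0n gtn_eqF ?(andP k14).1 // mulr0 add0r.
exact: match_moments.
Qed.

Lemma matched_law_support B :
  `|match_s (mom P)| + Num.sqrt (match_p (mom P)) <= B ->
  matched_law P [set x | `|x| <= B] = 1%E.
Proof.
have hankel := moment_inequality _ int4 mean0 var_gt0.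
have [a_le b_le] := match_atoms_le _ var_gt0 hankel.
move=> bound; apply: three_point_support; rewrite inE /=.
- by rewrite normr0; apply: le_trans bound; rewrite addr_ge0 ?sqrtr_ge0.
- by rewrite ger0_norm ?match_a_ge0 //; apply: le_trans bound.
- by rewrite normrN ger0_norm ?match_b_ge0 //; apply: le_trans bound.
Qed.

End MatchedLaw.

Lemma weights_rademacher {R : numFieldType} : weights3 (0 : R) 2^-1 2^-1.
Proof. by apply/and4P; split => //; apply/eqP; field. Qed.

Section RademacherLaw.
Context {R : realType} (P : probability R R).

Lemma scaled_rademacher_mom k : mom P 1 = 0 -> (1 <= k <= 2)%N ->
  mom (scaled_rademacher P) k = mom P k.
Proof.
move=> mean0; rewrite mom_three_point ?weights_rademacher // mul0r add0r.
case: k => [|[|[|k]]] //= _; first by rewrite mean0 !expr1; field.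
by rewrite sqrrN sqr_sqrtr ?mom2_ge0 //; field.
Qed.

Lemma scaled_rademacher_support B : Num.sqrt (mom P 2) <= B ->
  scaled_rademacher P [set x | `|x| <= B] = 1%E.
Proof.
move=> bound; have B_ge0 := le_trans (sqrtr_ge0 _) bound.
by apply: three_point_support; rewrite inE /= ?normrN ?normr0 ?ger0_norm ?sqrtr_ge0.
Qed.

End RademacherLaw.

Section SupportScale.
Context {R : realType} (A : R).
Hypothesis A_ge0 : 0 <= A.

(* [A + ln N] will bound [sqrt N] times every atom; at [N = 0] there are no
   entries and [support_scale] only has to be positive. *)
Definition support_scale (N : nat) : R :=
  if N is 0 then 1 else Num.sqrt N%:R / ((A + 1) * (1 + ln N%:R)).

(* [ln N / (1 + ln N)] is smallest at [N = 2] among [N >= 2]. *)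
Definition support_const : R := ln 2 / ((1 + ln 2) * (A + 1)).

Let ln2_gt0 : 0 < ln (2 : R). Proof. by rewrite ln_gt0 // ltr1n. Qed.
Let A1_gt0 : 0 < A + 1. Proof. by rewrite ltr_wpDl. Qed.

Lemma support_const_gt0 : 0 < support_const.
Proof. by rewrite divr_gt0 // mulr_gt0 // addr_gt0. Qed.

Lemma support_scale_gt0 N : 0 < support_scale N.
Proof.
case: N => [|n] //=; have lnN_ge0 : 0 <= ln (n.+1%:R : R) by rewrite ln_ge0 // ler1n.
by rewrite divr_gt0 ?sqrtr_gt0 ?ltr0n // mulr_gt0 // ltr_wpDr.
Qed.

Lemma support_scale_ge N :
  support_const * Num.sqrt N%:R / ln N%:R <= support_scale N.
Proof.
case: N => [|[|n]]; first by rewrite sqrtr0 mulr0 mul0r ltW ?support_scale_gt0.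
  by rewrite ln1 invr0 mulr0 ltW ?support_scale_gt0.
rewrite /support_scale /support_const.
set L := ln (n.+2%:R : R); set l := ln (2 : R); set s := Num.sqrt _.
have l_le : l <= L by rewrite ler_ln ?posrE ?ler_nat ?ltr0n.
have L_gt0 : 0 < L := lt_le_trans ln2_gt0 l_le.
have s_gt0 : 0 < s by rewrite sqrtr_gt0 ltr0n.
have l1_gt0 : 0 < 1 + l by rewrite addr_gt0.
have L1_gt0 : 0 < 1 + L by rewrite addr_gt0.
have D_gt0 : 0 < (1 + l) * (A + 1) * L * (1 + L) by rewrite !mulr_gt0.
have -> : l / ((1 + l) * (A + 1)) * s / L =
    s * (l * (1 + L)) / ((1 + l) * (A + 1) * L * (1 + L)).
  by field; rewrite !gt_eqF.
have -> : s / ((A + 1) * (1 + L)) = s * ((1 + l) * L) / ((1 + l) * (A + 1) * L * (1 + L)).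
  by field; rewrite !gt_eqF.
rewrite ler_pM2r ?invr_gt0 // ler_pM2l //.
by rewrite mulrDr mulrDl mulr1 mul1r [l * L]mulrC lerD2r.
Qed.

Lemma le_inv_support_scale N t : (0 < N)%N -> 0 <= t ->
  Num.sqrt N%:R * t <= A + ln N%:R -> t <= (support_scale N)^-1.
Proof.
case: N => [|n] // _ t_ge0 bound; have lnN_ge0 : 0 <= ln (n.+1%:R : R) by rewrite ln_ge0 // ler1n.
rewrite /support_scale invf_div ler_pdivlMr ?sqrtr_gt0 ?ltr0n // mulrC.
apply: le_trans bound _.
have : 0 <= A * ln (n.+1%:R : R) by rewrite mulr_ge0.
rewrite mulrDl mulrDr mulrDr !mul1r mulr1; lra.
Qed.

End SupportScale.

Definition moment_bounds {R : realType} (mu : entry_laws R) (C1 : R) : Prop :=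
  forall N (i j : 'I_N),
    ((\int[mu N i i]_x ((`|x| ^+ 2)%:E) <= (C1 / N%:R)%:E)%E) /\
    ((i < j)%N ->
       (\int[mu N i j]_x ((`|x| ^+ 2)%:E) = (N%:R^-1)%:E)%E /\
       (\int[mu N i j]_x ((`|x| ^+ 3)%:E) <= (C1 * N%:R `^ (- (3 / 2)))%:E)%E /\
       (\int[mu N i j]_x ((`|x| ^+ 4)%:E) <= (C1 * ln N%:R * N%:R `^ (-2))%:E)%E).

Definition matched_laws {R : realType} (mu : entry_laws R) : entry_laws R :=
  fun N i j => if i == j then scaled_rademacher (mu N i j) else matched_law (mu N i j).

Section MatchedLaws.
Context {R : realType} {mu : entry_laws R} {C1 : R}.
Hypotheses (mu_wigner : gen_wigner mu) (mu_bounds : moment_bounds mu C1) (C1_gt0 : 0 < C1).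

Lemma offdiag_entry {N} {i j : 'I_N} : i != j ->
  [/\ forall k, (k <= 4)%N -> (mu N i j).-integrable setT (fun x => (x ^+ k)%:E),
      mom (mu N i j) 1 = 0, mom (mu N i j) 2 = N%:R^-1 &
      Num.sqrt N%:R * (`|match_s (mom (mu N i j))| + Num.sqrt (match_p (mom (mu N i j))))
        <= 2 * C1 + ln N%:R].
Proof.
have [mu_sym [C0 [_ mu_entry]]] := mu_wigner.
move=> ij; wlog lt_ij : i j ij / (i < j)%N.
  move=> hwlog; have [lt_ij|gt_ij|/val_inj eq_ij] := ltngtP i j.
  - exact: hwlog.
  - by rewrite mu_sym; apply: hwlog; rewrite // eq_sym.
  - by move: ij; rewrite eq_ij eqxx.
have N_gt1 : (1 < N)%N := leq_ltn_trans (leq_ltn_trans (leq0n i) lt_ij) (ltn_ord j).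
have [_ /(_ lt_ij)[abs2 [abs3 abs4]]] := mu_bounds N i j.
have [int1 [mean0 _]] := mu_entry N i j.
split; [exact: offdiag_integrable int1 abs2 abs3 abs4 | exact: mom1_eq0 |
        exact: offdiag_mom2 abs2 | exact: offdiag_atoms_scaled].
Qed.

Lemma diag_entry N (i : 'I_N) :
  [/\ forall k, (k <= 2)%N -> (mu N i i).-integrable setT (fun x => (x ^+ k)%:E),
      mom (mu N i i) 1 = 0, mom (mu N i i) 2 <= C1 / N%:R &
      Num.sqrt N%:R * Num.sqrt (mom (mu N i i) 2) <= C1 + 1].
Proof.
have [_ [C0 [_ mu_entry]]] := mu_wigner.
have N_gt0 : (0 < N)%N by apply: leq_ltn_trans (ltn_ord i).
have [abs2 _] := mu_bounds N i i; have [int1 [mean0 _]] := mu_entry N i i.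
split; [exact: diag_integrable int1 abs2 | exact: mom1_eq0 |
        exact: diag_mom2_le int1 abs2 | exact: diag_atom_scaled].
Qed.

Lemma matched_laws_mom N (i j : 'I_N) k : (1 <= k <= (if i == j then 2 else 4))%N ->
  mom (matched_laws mu N i j) k = mom (mu N i j) k.
Proof.
rewrite /matched_laws; case: eqP => [<-|/eqP ij] k_le.
  by have [_ mean0 _ _] := diag_entry N i; exact: scaled_rademacher_mom.
have [int4 mean0 var _] := offdiag_entry ij.
by apply: matched_law_mom => //; rewrite var invr_gt0 ltr0n (leq_ltn_trans _ (ltn_ord i)).
Qed.

Lemma matched_laws_integrable N (i j : 'I_N) (f : R -> R) : measurable_fun setT f ->
  (matched_laws mu N i j).-integrable setT (fun x => (f x)%:E).
Proof. by rewrite /matched_laws; case: ifP => _; exact: three_point_integrable. Qed.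

Lemma matched_laws_wigner : gen_wigner (matched_laws mu).
Proof.
have [mu_sym _] := mu_wigner.
split=> [N i j|]; first by rewrite /matched_laws eq_sym mu_sym.
exists (C1 + 1); split=> [|N i j]; first by rewrite addr_ge0 // ltW.
have int_expr k := matched_laws_integrable N i j _ (measurable_funX k (@measurable_id _ R setT)).
have mom12 k : (1 <= k <= 2)%N -> mom (matched_laws mu N i j) k = mom (mu N i j) k.
  move=> /andP[k_gt0 k_le2]; apply: matched_laws_mom.
  by rewrite k_gt0 /=; case: ifP => _; apply: leq_trans k_le2 _.
split; first exact: int_expr 1%N.
change (\int[matched_laws mu N i j]_x x%:E)%E with (\int[matched_laws mu N i j]_x (x ^+ 1)%:E)%E.
rewrite !integral_exprE ?int_expr // !mom12 //.
have N_gt0 : 0 < (N%:R : R) by rewrite ltr0n (leq_ltn_trans _ (ltn_ord i)).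
have [<-|ij] := eqVneq i j.
  have [_ mean0 var_le _] := diag_entry N i.
  rewrite mean0 mulr1 -EFinB lee_fin mulrDl mul1r ler_norml; split => //.
  have := mom2_ge0 (mu N i i); have := divr_ge0 (ltW C1_gt0) (ltW N_gt0).
  have : 0 < N%:R^-1 :> R by rewrite invr_gt0.
  by move=> *; apply/andP; split; lra.
have [_ mean0 -> _] := offdiag_entry ij.
by rewrite mean0 mulr0 -EFinB subrr abse0.
Qed.

Lemma matched_laws_support : bounded_support (matched_laws mu) (support_scale (2 * C1 + 1)).
Proof.
have A_ge0 : 0 <= 2 * C1 + 1 by rewrite addr_ge0 // mulr_ge0 // ltW.
exists 1; split=> // N i j.
have N_gt0 : (0 < N)%N := leq_ltn_trans (leq0n i) (ltn_ord i).
have lnN_ge0 : 0 <= ln (N%:R : R) by rewrite ln_ge0 // ler1n.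
suff -> : matched_laws mu N i j [set x | `|x| <= (support_scale (2 * C1 + 1) N)^-1] = 1%E.
  by rewrite lee_fin lerBlDr lerDl expR_ge0.
rewrite /matched_laws; have [<-|ij] := eqVneq i j.
  have [_ _ _ atom_le] := diag_entry N i.
  apply: scaled_rademacher_support; apply: le_inv_support_scale => //.
  by apply: le_trans atom_le _; have := C1_gt0; lra.
have [int4 mean0 var atoms_le] := offdiag_entry ij.
apply: matched_law_support => //.
  by rewrite var invr_gt0 ltr0n.
apply: le_inv_support_scale => //.
by apply: le_trans atoms_le _; have := C1_gt0; lra.
Qed.

Lemma matched_laws_xmoment N (i j : 'I_N) k : (1 <= k <= (if i == j then 2 else 4))%N ->
  xmoment mu i j k = xmoment (matched_laws mu) i j k.
Proof.
move=> k_le; apply: integral_scaled_expr_eq; last by rewrite matched_laws_mom.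
- move: k_le; have [<-|ij] := eqVneq i j; rewrite ?eqxx ?(negbTE ij) => /andP[_ k_le].
    by have [int2 _ _ _] := diag_entry N i; exact: int2.
  by have [int4 _ _ _] := offdiag_entry ij; exact: int4.
- exact: matched_laws_integrable _ (measurable_funX k (@measurable_id _ R setT)).
Qed.

End MatchedLaws.

Theorem mainTheorem7 (R : realType) (mu : entry_laws R) :
  gen_wigner mu ->
  (exists C1 : R, 0 < C1 /\
     forall N (i j : 'I_N),
       ((\int[mu N i i]_x ((`|x| ^+ 2)%:E) <= (C1 / N%:R)%:E)%E) /\
       ((i < j)%N ->
          (\int[mu N i j]_x ((`|x| ^+ 2)%:E) = (N%:R^-1)%:E)%E /\
          (\int[mu N i j]_x ((`|x| ^+ 3)%:E) <= (C1 * N%:R `^ (- (3 / 2)))%:E)%E /\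
          (\int[mu N i j]_x ((`|x| ^+ 4)%:E) <= (C1 * ln N%:R * N%:R `^ (-2))%:E)%E)) ->
  (exists phi : R, 0 < phi /\ bounded_support mu (fun N => N%:R `^ phi)) ->
  exists mu' : entry_laws R,
    gen_wigner mu' /\
    (exists (c : R) (q : nat -> R), 0 < c /\
       (forall N, 0 < q N /\ c * Num.sqrt N%:R / ln N%:R <= q N) /\
       bounded_support mu' q) /\
    (forall N (i j : 'I_N), i != j ->
       forall k, (1 <= k <= 4)%N -> xmoment mu i j k = xmoment mu' i j k) /\
    (forall N (i : 'I_N) k, (1 <= k <= 2)%N -> xmoment mu i i k = xmoment mu' i i k).
Proof.
move=> mu_wigner [C1 [C1_gt0 mu_bounds]] _.
have A_ge0 : 0 <= 2 * C1 + 1 by rewrite addr_ge0 // mulr_ge0 // ltW.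
exists (matched_laws mu); split; first exact: matched_laws_wigner mu_wigner mu_bounds C1_gt0.
split; last split.
- exists (support_const (2 * C1 + 1)), (support_scale (2 * C1 + 1)).
  split; first exact: support_const_gt0.
  split; last exact: matched_laws_support mu_wigner mu_bounds C1_gt0.
  by move=> N; split; [exact: support_scale_gt0 | exact: support_scale_ge].
- by move=> N i j ij k k_le; apply: (matched_laws_xmoment mu_wigner mu_bounds C1_gt0); rewrite (negbTE ij).
- by move=> N i k k_le; apply: (matched_laws_xmoment mu_wigner mu_bounds C1_gt0); rewrite eqxx.
Qed.
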